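(* Let $n\geq 2$ be an integer and let $CCC(n)$ be the crystal cubic carbon graph with $n$ layers. Then the minimum cardinality of a doubly resolving set of $CCC(n)$ is $\psi(CCC(n))=24\times 7^{n-2}$.
   Context: All graphs are simple and connected; $d(u,v)$ is the shortest-path distance. For an ordered set $Z=\{z_1,\dots,z_m\}$ of vertices, $r(u\,|\,Z)=(d(u,z_1),\dots,d(u,z_m))$. $Z$ is a doubly resolving set of $G$ if for every two distinct vertices $u,v$ of $G$, $r(u|Z)-r(v|Z)\neq \mu(1,\dots,1)$ for every integer $\mu$; $\psi(G)$ denotes the minimum size of a doubly resolving set. The cube $C_4\Box P_2$ is the graph on $\{1,\dots,8\}$ with edges $12,23,34,14,56,67,78,58$ and $15,26,37,48$. The crystal cubic carbon $CCC(n)$ is constructed as follows. Its vertex set is partitioned into layers $L_1,\dots,L_n$. Layer $L_1$ is a copy of $C_4\Box P_2$ with vertices $1,\dots,8$. For $2\leq k\leq n$, layer $L_k$ consists of $8\times 7^{k-2}$ vertex-disjoint copies of $C_4\Box P_2$ (called cubes), each cube having a distinguished vertex (the vertex labelled $1$ in its copy) called its head vertex. Each vertex $r\in L_1$ is joined by an edge to the head vertex of exactly one cube of $L_2$ (distinct vertices of $L_1$ to distinct cubes). For $2\leq k<n$, each of the $7$ non-head vertices of each cube of $L_k$ is joined by an edge to the head vertex of exactly one cube of $L_{k+1}$, in such a way that every cube of $L_{k+1}$ has its head joined to exactly one such vertex. There are no other edges. Thus $CCC(n)$ has $8+64\sum_{k=2}^{n}7^{k-2}$ vertices. *)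

From mathcomp Require Import all_boot all_order all_algebra.
Set Implicit Arguments. Unset Strict Implicit. Unset Printing Implicit Defensive.

Definition reach (T : finType) (e : rel T) (u : T) (k : nat) : {set T} :=
  iter k (fun S => S :|: [set y | [exists x in S, e x y]]) [set u].

(* shortest-path distance: least k with v reachable from u in <= k steps
   (for a connected graph such k is < #|T|) *)
Definition dist (T : finType) (e : rel T) (u v : T) : nat :=
  find (fun k => v \in reach e u k) (iota 0 #|T|).

Definition doubly_resolving (T : finType) (e : rel T) (Z : {set T}) : Prop :=
  forall u v : T, u != v ->
    ~ (exists mu : int, forall z, z \in Z ->
         ((dist e u z)%:Z - (dist e v z)%:Z = mu)%R).

Definition psi_is (T : finType) (e : rel T) (k : nat) : Prop :=
  (exists Z : {set T}, doubly_resolving e Z /\ #|Z| = k) /\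
  (forall Z : {set T}, doubly_resolving e Z -> k <= #|Z|).

(* ---------- the cube C4 [] P2, vertices 1..8 encoded as 0..7 ---------- *)
Definition cube_edges : seq (nat * nat) :=
  [:: (0,1); (1,2); (2,3); (0,3); (4,5); (5,6); (6,7); (4,7);
      (0,4); (1,5); (2,6); (3,7)].

Definition cube_adj (p q : 'I_8) : bool :=
  (((p : nat), (q : nat)) \in cube_edges) || (((q : nat), (p : nat)) \in cube_edges).

(* ---------- crystal cubic carbon CCC(n) ----------
   A cube is identified by an address s : seq 'I_8:
     - [::] is the cube of layer L1;
     - [:: r] is the cube of L2 attached to vertex r of L1;
     - rcons s p (p non-head, i.e. p != 0) is the cube of L_{k+1} attached
       to vertex p of the cube s of L_k (k >= 2).
   So cubes of layer L_k have addresses of length k-1 <= n-1, all of whose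
   entries except the first are nonzero.  A vertex is (address, position),
   position 0 being the head vertex (label 1). *)
Definition ccc_pre (n : nat) := ({k : 'I_n & k.-tuple 'I_8} * 'I_8)%type.

Definition ccc_addr_pre n (x : ccc_pre n) : seq 'I_8 := tagged x.1.

Definition ccc_valid n : pred (ccc_pre n) :=
  fun x => all (fun i => i != ord0) (behead (ccc_addr_pre x)).

Definition CCC (n : nat) : finType := {x : ccc_pre n | ccc_valid x}.

Definition ccc_addr n (v : CCC n) : seq 'I_8 := ccc_addr_pre (val v).
Definition ccc_pos n (v : CCC n) : 'I_8 := (val v).2.

Definition ccc_adj (n : nat) : rel (CCC n) := fun u v =>
  [|| (ccc_addr u == ccc_addr v) && cube_adj (ccc_pos u) (ccc_pos v),
      (ccc_addr v == rcons (ccc_addr u) (ccc_pos u)) && (ccc_pos v == ord0)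
    | (ccc_addr u == rcons (ccc_addr v) (ccc_pos v)) && (ccc_pos u == ord0)].

From mathcomp Require Import all_boot all_order all_algebra.
From mathcomp Require Import zify.
Set Implicit Arguments. Unset Strict Implicit. Unset Printing Implicit Defensive.

(* A leaf cube (a cube of the last layer) is attached to the rest of the graph only through
   its head, so from outside, a vertex of a leaf cube is as far as its head plus its distance
   to the head inside the cube.  Two vertices of the 3-cube never separate all pairs of its
   vertices up to a common shift, hence a doubly resolving set contains three non-head
   vertices of each of the 8 * 7^(n-2) leaf cubes.  Conversely, the three neighbours of the
   head in every leaf cube suffice: together with a vertex outside, they separate the vertices
   of a leaf cube; a non-head vertex of a leaf cube is closer to some head neighbour than to
   the head, while every vertex outside the cube is farther from them than from the head; and
   every other vertex u lies on a geodesic from a given v to some leaf head, so a common shift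
   would equal both d(u,v) and -d(u,v). *)

Section Distance.
Variables (T : finType) (e : rel T).

Lemma reach0 u y : (y \in reach e u 0) = (y == u).
Proof. by rewrite /reach /= inE. Qed.

Lemma reachS u k y :
  (y \in reach e u k.+1) = (y \in reach e u k) || [exists x in reach e u k, e x y].
Proof. by rewrite /reach iterS !inE. Qed.

Lemma reach_mono u k k' y : k <= k' -> y \in reach e u k -> y \in reach e u k'.
Proof.
move=> /subnKC <-; elim: (k' - k) => [|m IH]; first by rewrite addn0.
by move=> yk; rewrite addnS reachS IH.
Qed.

Lemma reach_trans u x y j k :
  x \in reach e u j -> y \in reach e x k -> y \in reach e u (j + k).
Proof.
move=> xj; elim: k y => [|k IH] y; first by rewrite reach0 addn0 => /eqP ->.
rewrite reachS addnS => /orP [/IH yk|/existsP [w /andP [/IH wk ewy]]].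
  by rewrite reachS yk.
by rewrite reachS; apply/orP; right; apply/existsP; exists w; rewrite wk.
Qed.

Lemma reach_edge x y : e x y -> y \in reach e x 1.
Proof.
by move=> exy; rewrite reachS; apply/orP; right; apply/existsP; exists x; rewrite reach0 eqxx.
Qed.

Lemma reach_stable u k :
  reach e u k.+1 = reach e u k -> reach e u k.+2 = reach e u k.+1.
Proof. by move=> fixed; rewrite [LHS]/reach iterS -/(reach e u k.+1) fixed -[in RHS]fixed. Qed.

Lemma reach_card u k : reach e u k.+1 != reach e u k -> k.+1 < #|reach e u k.+1|.
Proof.
have grows j : reach e u j.+1 != reach e u j -> #|reach e u j| < #|reach e u j.+1|.
  move=> neq; apply: proper_card; rewrite properEneq eq_sym neq /=.
  by apply/subsetP => y; apply: reach_mono (leqnSn j).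
elim: k => [|k IH] neq; first by have := grows 0 neq; rewrite /reach /= cards1.
have neq' : reach e u k.+1 != reach e u k.
  by apply: contra neq => /eqP/reach_stable ->.
exact: leq_ltn_trans (IH neq') (grows _ neq).
Qed.

Lemma reach_saturate u k y : y \in reach e u k -> y \in reach e u #|T|.-1.
Proof.
set N := #|T|.-1.
have T_gt0 : 0 < #|T| by apply/card_gt0P; exists u.
have fixed : reach e u N.+1 = reach e u N.
  by apply/eqP; apply: contraT => /reach_card; rewrite prednK // ltnNge max_card.
have const m : reach e u (N + m) = reach e u N.
  elim: m => [|m IH]; first by rewrite addn0.
  by rewrite addnS [LHS]/reach iterS -/(reach e u (N + m)) IH.
case: (leqP k N) => [le_k|/ltnW lt_k]; first exact: reach_mono.
by rewrite -(subnKC lt_k) const.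
Qed.

Hypothesis e_sym : symmetric e.

Lemma reach_sym u y k : y \in reach e u k -> u \in reach e y k.
Proof.
elim: k y => [|k IH] y; first by rewrite !reach0 eq_sym.
rewrite reachS => /orP [/IH uk|/existsP [x /andP [/IH ux exy]]].
  exact: reach_mono uk.
by rewrite -add1n; apply: reach_trans ux; apply: reach_edge; rewrite e_sym.
Qed.

Hypothesis e_conn : forall u v, exists k, v \in reach e u k.

Lemma mem_reach_dist u v k : (v \in reach e u k) = (dist e u v <= k).
Proof.
have [j vj] := e_conn u v; have vT := reach_saturate vj.
have T_gt0 : 0 < #|T| by apply/card_gt0P; exists u.
have found : has (fun k => v \in reach e u k) (iota 0 #|T|).
  by apply/hasP; exists #|T|.-1 => //; rewrite mem_iota add0n prednK ?leqnn.
have dist_lt : dist e u v < #|T| by rewrite -[X in _ < X](size_iota 0) -has_find.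
have reach_dist : v \in reach e u (dist e u v).
  by have := nth_find 0 found; rewrite nth_iota.
apply/idP/idP => [vk|le_k]; last exact: reach_mono le_k reach_dist.
rewrite leqNgt; apply/negP => lt_k.
by have := before_find 0 lt_k; rewrite nth_iota ?vk // (ltn_trans lt_k).
Qed.

Lemma dist_refl u : dist e u u = 0.
Proof. by apply/eqP; rewrite -leqn0 -mem_reach_dist reach0. Qed.

Lemma dist_eq0 u v : dist e u v = 0 -> u = v.
Proof. by move=> d0; have := leqnn (dist e u v); rewrite {2}d0 -mem_reach_dist reach0 => /eqP. Qed.

Lemma dist_sym u v : dist e u v = dist e v u.
Proof.
by apply/eqP; rewrite eqn_leq -!mem_reach_dist; apply/andP; split; apply: reach_sym;
  rewrite mem_reach_dist.
Qed.

Lemma dist_triangle u v w : dist e u w <= dist e u v + dist e v w.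
Proof. by rewrite -mem_reach_dist; apply: reach_trans; rewrite mem_reach_dist. Qed.

Lemma dist_edge x y : e x y -> dist e x y <= 1.
Proof. by rewrite -mem_reach_dist; apply: reach_edge. Qed.

Lemma lipschitz_le_dist (f : T -> nat) :
  (forall x y, e x y -> f y <= f x + 1) -> forall u v, f v <= f u + dist e u v.
Proof.
move=> f_lip u v.
suff f_reach k y : y \in reach e u k -> f y <= f u + k by apply: f_reach; rewrite mem_reach_dist.
elim: k y => [|k IH] y; first by rewrite reach0 addn0 => /eqP ->.
rewrite reachS => /orP [/IH|/existsP [x /andP [/IH fx /f_lip fy]]]; first by lia.
by apply: leq_trans fy _; rewrite addn1 addnS ltnS.
Qed.

(* If every edge leaving [A] starts at [w], every path out of [A] goes through [w]. *)
Lemma dist_cut (A : {set T}) w :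
  (forall x y, x \in A -> y \notin A -> e x y -> x = w) ->
  forall x y, x \in A -> y \notin A -> dist e x y = dist e x w + dist e w y.
Proof.
move=> gate x y xA yA; apply/eqP; rewrite eqn_leq dist_triangle /=.
pose f z := if z \in A then dist e x z else dist e x w + dist e w z.
have f_lip a b : e a b -> f b <= f a + 1.
  move=> eab; have := dist_edge eab; have := dist_triangle x a b.
  rewrite /f; case: (boolP (a \in A)) => aA; case: (boolP (b \in A)) => bA.
  - by lia.
  - by rewrite (gate a b aA bA eab); lia.
  - have eba : e b a by rewrite e_sym.
    by rewrite (gate b a bA aA eba); lia.
  - by have := dist_triangle w a b; lia.
by have := lipschitz_le_dist f_lip x y; rewrite /f xA (negbTE yA) dist_refl.
Qed.

End Distance.

Lemma card_fibers_le (T I : finType) (f : T -> I) (P : pred I) (A : {set T}) :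
  \sum_(i | P i) #|[set x in A | f x == i]| <= #|A|.
Proof.
apply: (@leq_trans (\sum_i #|[set x in A | f x == i]|)).
  by rewrite [X in _ <= X](bigID P) leq_addr.
rewrite -sum1_card (partition_big f xpredT) //=; apply/eq_leq/eq_bigr => i _.
by rewrite -sum1_card; apply: eq_bigl => x; rewrite inE.
Qed.

Lemma card_le2_cover (T : finType) (x0 : T) (A : {set T}) :
  #|A| <= 2 -> exists x1 x2, forall x, x \in A -> x = x1 \/ x = x2.
Proof.
move=> A_le2; exists (nth x0 (enum A) 0), (nth x0 (enum A) 1) => x xA.
have xA' : x \in enum A by rewrite mem_enum.
have : index x (enum A) < 2 by rewrite (leq_trans _ A_le2) // cardE index_mem.
by rewrite -{2 3}(nth_index x0 xA'); case: (index x _) => [|[|]] //; [left|right].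
Qed.

(* A Gray code along each 4-cycle: adjacent vertices of the cube get 3-bit labels
   differing in exactly one bit. *)
Definition cube_label (p : 'I_8) : nat := nth 0 [:: 0; 1; 3; 2; 4; 5; 7; 6] p.

Definition cube_dist (p q : 'I_8) : nat :=
  count (fun i => odd (cube_label p %/ 2 ^ i) != odd (cube_label q %/ 2 ^ i)) (iota 0 3).

(* Unlike [enum 'I_8], this enumeration evaluates under [vm_compute]. *)
Definition ord8 (m : nat) : 'I_8 := Ordinal (ltn_pmod m (isT : 0 < 8)).
Definition cube_vertices : seq 'I_8 := map ord8 (iota 0 8).

Lemma mem_cube_vertices p : p \in cube_vertices.
Proof.
have -> : p = ord8 p by apply: val_inj; rewrite /= modn_small.
by apply: map_f; rewrite mem_iota ltn_ord.
Qed.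

Lemma cube_vertices_all (P : pred 'I_8) : all P cube_vertices -> forall p, P p.
Proof. by move=> /allP allP p; apply: allP (mem_cube_vertices p). Qed.

Lemma cube_vertices_all2 (P : 'I_8 -> pred 'I_8) :
  all (fun p => all (P p) cube_vertices) cube_vertices -> forall p q, P p q.
Proof. by move=> /cube_vertices_all allP p; apply: cube_vertices_all (allP p). Qed.

Lemma cube_vertices_all3 (P : 'I_8 -> 'I_8 -> pred 'I_8) :
  all (fun a => all (fun p => all (P a p) cube_vertices) cube_vertices) cube_vertices ->
  forall a p q, P a p q.
Proof. by move=> /cube_vertices_all allP a; apply: cube_vertices_all2 (allP a). Qed.

Lemma cube_adj_dist p q : cube_adj p q = (cube_dist p q == 1).
Proof. by apply/eqP; move: p q; apply: cube_vertices_all2; vm_compute. Qed.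

Lemma cube_dist_sym p q : cube_dist p q = cube_dist q p.
Proof. by apply/eqP; move: p q; apply: cube_vertices_all2; vm_compute. Qed.

Lemma cube_dist_refl p : cube_dist p p = 0.
Proof. by apply/eqP; move: p; apply: cube_vertices_all; vm_compute. Qed.

Lemma cube_adj_sym p q : cube_adj p q = cube_adj q p.
Proof. by rewrite !cube_adj_dist cube_dist_sym. Qed.

Lemma cube_dist_lipschitz a p q : cube_adj p q -> cube_dist a q <= cube_dist a p + 1.
Proof.
by apply/implyP; move: a p q; apply: cube_vertices_all3; vm_compute.
Qed.

Lemma cube_dist_pred a b :
  a != b -> exists2 q, cube_adj q b & (cube_dist a q).+1 = cube_dist a b.
Proof.
have: all (fun a => all (fun b => (a != b) ==>
          has (fun q => cube_adj q b && ((cube_dist a q).+1 == cube_dist a b)) cube_vertices)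
        cube_vertices) cube_vertices by vm_compute.
move=> /cube_vertices_all2/(_ a b)/implyP found /found/hasP [q _ /andP [qb /eqP dq]].
by exists q.
Qed.

Lemma cube_dist_eq0 p q : cube_dist p q = 0 -> p = q.
Proof. by apply: contra_eq => /cube_dist_pred [r _ <-]. Qed.

Lemma card_head_nbrs : #|[set p | cube_adj ord0 p]| = 3.
Proof.
have -> : [set p | cube_adj ord0 p] = [set p in [:: ord8 1; ord8 3; ord8 4]].
  by apply/setP => p; rewrite !inE; apply/eqP; move: p; apply: cube_vertices_all; vm_compute.
by rewrite cardsE; apply/card_uniqP.
Qed.

(* [cube_dist a x + cube_dist b 0 = cube_dist b x + cube_dist a 0] says
   [d(a,x) - d(b,x) = d(a,0) - d(b,0)], written without truncated subtraction. *)
Lemma head_nbrs_resolve_cube a b :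
  (forall x, cube_adj ord0 x ->
     cube_dist a x + cube_dist b ord0 = cube_dist b x + cube_dist a ord0) -> a = b.
Proof.
have: all (fun a => all (fun b =>
          all (fun x => cube_adj ord0 x ==>
                 (cube_dist a x + cube_dist b ord0 == cube_dist b x + cube_dist a ord0))
            cube_vertices ==> (a == b)) cube_vertices) cube_vertices by vm_compute.
move=> /cube_vertices_all2/(_ a b)/implyP resolved same; apply/eqP/resolved.
by apply/allP => x _; apply/implyP => /same ->.
Qed.

Lemma two_cube_vertices_not_resolving x1 x2 : exists a b, [/\ a != b,
  cube_dist a x1 + cube_dist b ord0 = cube_dist b x1 + cube_dist a ord0 &
  cube_dist a x2 + cube_dist b ord0 = cube_dist b x2 + cube_dist a ord0].
Proof.
have: all (fun x1 => all (fun x2 => has (fun a => has (fun b => [&& a != b,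
          cube_dist a x1 + cube_dist b ord0 == cube_dist b x1 + cube_dist a ord0 &
          cube_dist a x2 + cube_dist b ord0 == cube_dist b x2 + cube_dist a ord0])
        cube_vertices) cube_vertices) cube_vertices) cube_vertices by vm_compute.
move=> /cube_vertices_all2/(_ x1 x2)/hasP [a _ /hasP [b _ /and3P [ab /eqP d1 /eqP d2]]].
by exists a, b.
Qed.

Definition valid_addr (s : seq 'I_8) := all (fun i => i != ord0) (behead s).

Lemma valid_addr_rcons s q :
  valid_addr (rcons s q) = valid_addr s && ((s == [::]) || (q != ord0)).
Proof. by rewrite /valid_addr; case: s => //= x s; rewrite all_rcons andbC. Qed.

Section CCCGraph.
Variable n : nat.

Local Notation V := (CCC n).
Local Notation e := (@ccc_adj n).
Local Notation addr := (@ccc_addr n).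
Local Notation pos := (@ccc_pos n).
Local Notation D := (dist e).

Lemma addr_size (u : V) : size (addr u) < n.
Proof. by case: u => [[[k t] p] ?]; rewrite /ccc_addr /ccc_addr_pre /= size_tuple. Qed.

Lemma addr_valid (u : V) : valid_addr (addr u).
Proof. by case: u => [[[k t] p] ?]. Qed.

Definition ccc_vertex (s : seq 'I_8) (s_lt : size s < n) (s_valid : valid_addr s)
    (p : 'I_8) : V :=
  exist (@ccc_valid n) (Tagged (fun k : 'I_n => k.-tuple 'I_8)
                          (in_tuple s : (Ordinal s_lt).-tuple 'I_8), p) s_valid.

Lemma ccc_eq (u v : V) : addr u = addr v -> pos u = pos v -> u = v.
Proof.
case: u => [[[k t] p] uV]; case: v => [[[k' t'] p'] vV].
rewrite /ccc_addr /ccc_pos /ccc_addr_pre /= => tt' pp'; subst p'.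
have kk' : k = k' by apply: val_inj; rewrite /= -(size_tuple t) -(size_tuple t') tt'.
subst k'; have tt : t = t' by apply: val_inj.
by subst t'; rewrite (bool_irrelevance uV vV).
Qed.

Definition cube_at (u : V) (p : 'I_8) : V := ccc_vertex (addr_size u) (addr_valid u) p.
Definition cube_head (u : V) : V := cube_at u ord0.

Lemma cube_at_addr u p : addr (cube_at u p) = addr u. Proof. by []. Qed.
Lemma cube_at_pos u p : pos (cube_at u p) = p. Proof. by []. Qed.

Lemma ccc_adj_sym : symmetric e.
Proof.
move=> x y; rewrite /ccc_adj cube_adj_sym (eq_sym (addr x)).
by case: (_ && _); case: (_ && _); case: (_ && _).
Qed.

Lemma ccc_adjP x y : e x y ->
  [\/ addr x = addr y /\ cube_adj (pos x) (pos y),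
      addr y = rcons (addr x) (pos x) /\ pos y = ord0 |
      addr x = rcons (addr y) (pos y) /\ pos x = ord0].
Proof.
by case/or3P => /andP [/eqP ? b]; [apply: Or31 | apply: Or32 | apply: Or33];
  split; rewrite // -(eqP b).
Qed.

Lemma cube_reach (u v : V) : addr u = addr v -> v \in reach e u (cube_dist (pos u) (pos v)).
Proof.
move=> uv; move duv: (cube_dist _ _) => k; elim: k v uv duv => [|k IH] v uv duv.
  by rewrite reach0; apply/eqP/ccc_eq; last exact/esym/cube_dist_eq0.
have /cube_dist_pred [q qv dq] : pos u != pos v.
  by apply: contra_eq_neq duv => ->; rewrite cube_dist_refl.
rewrite reachS; apply/orP; right; apply/existsP; exists (cube_at u q).
rewrite IH //=; last by apply: succn_inj; rewrite dq.
by rewrite /ccc_adj cube_at_addr cube_at_pos uv eqxx qv.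
Qed.

Lemma ccc_connected (u v : V) : exists k, v \in reach e u k.
Proof.
have n_gt0 : 0 < n := leq_ltn_trans (leq0n _) (addr_size u).
pose root : V := @ccc_vertex [::] n_gt0 isT ord0.
suff to_root w : exists k, root \in reach e w k.
  have [[i ui] [j vj]] := (to_root u, to_root v).
  by exists (i + j); apply: reach_trans ui (reach_sym ccc_adj_sym vj).
move wm: (size (addr w)) => m; elim: m w wm => [|m IH] w wm.
  exists (cube_dist (pos w) ord0); apply: cube_reach.
  by case: (addr w) wm.
case/lastP E : (addr w) wm => [//|s q]; rewrite size_rcons => -[sm].
have s_lt : size s < n by apply: leq_ltn_trans (addr_size w); rewrite E size_rcons.
have s_valid : valid_addr s by have := addr_valid w; rewrite E valid_addr_rcons => /andP [].
have [k parent_root] := IH (ccc_vertex s_lt s_valid q) sm.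
exists (cube_dist (pos w) ord0 + 1 + k); apply: reach_trans parent_root.
apply: reach_trans (cube_reach (v := cube_head w) _) _ => //.
by apply: reach_edge; rewrite /ccc_adj /cube_head cube_at_addr E /= !eqxx !orbT.
Qed.

Let D_refl u : D u u = 0 := dist_refl ccc_connected u.
Let D_sym u v : D u v = D v u := dist_sym ccc_adj_sym ccc_connected u v.
Let D_triangle u v w : D u w <= D u v + D v w := dist_triangle ccc_connected u v w.

Definition leaf (u : V) := size (addr u) == n.-1.
Definition leaf_head (u : V) := leaf u && (pos u == ord0).
Definition inner_leaf (u : V) := leaf u && (pos u != ord0).
Definition cube_inner (u v : V) := (addr v == addr u) && (pos v != ord0).

Lemma leaf_cube_at u p : leaf (cube_at u p) = leaf u. Proof. by []. Qed.

Lemma leaf_head_cube_head u : leaf_head (cube_head u) = leaf u.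
Proof. by rewrite /leaf_head leaf_cube_at cube_at_pos eqxx andbT. Qed.

Lemma cube_head_eq u v : addr u = addr v -> cube_head u = cube_head v.
Proof. by move=> uv; apply: ccc_eq. Qed.

Lemma cube_head_id u : pos u = ord0 -> cube_head u = u.
Proof. by move=> u0; apply: ccc_eq; [exact: cube_at_addr | rewrite cube_at_pos u0]. Qed.

Lemma cube_head_at u p : cube_head (cube_at u p) = cube_head u.
Proof. exact: cube_head_eq. Qed.

Lemma cube_inner_leaf u v : leaf u -> cube_inner u v -> inner_leaf v.
Proof. by move=> lu /andP [/eqP vu v0]; rewrite /inner_leaf v0 andbT /leaf vu. Qed.

Lemma leaf_childless (u x : V) q : leaf u -> addr x != rcons (addr u) q.
Proof.
move=> /eqP lu; apply/eqP => xu; have := addr_size x.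
by rewrite xu size_rcons lu prednK ?ltnn // (leq_ltn_trans _ (addr_size u)).
Qed.

Lemma dist_leaf_cube u v : leaf u -> addr u = addr v -> D u v = cube_dist (pos u) (pos v).
Proof.
move=> lu uv; apply/eqP; rewrite eqn_leq -(mem_reach_dist ccc_connected) cube_reach //=.
pose f y := if addr y == addr u then cube_dist (pos u) (pos y) else cube_dist (pos u) ord0 + 1.
have f_lip x y : e x y -> f y <= f x + 1.
  rewrite /f; case/ccc_adjP => [[xy adj]|[yx y0]|[xy x0]].
  - by rewrite xy; case: ifP => _; [exact: cube_dist_lipschitz | exact: leq_addr].
  - have xu : addr x != addr u.
      by apply/eqP => xu; have := leaf_childless y (pos x) lu; rewrite yx xu eqxx.
    by rewrite (negbTE xu) y0; case: ifP => _; lia.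
  - have yu : addr y != addr u.
      by apply/eqP => yu; have := leaf_childless x (pos y) lu; rewrite xy yu eqxx.
    by rewrite (negbTE yu) x0; case: ifP => _; lia.
by have := lipschitz_le_dist ccc_connected f_lip u v; rewrite /f -uv eqxx cube_dist_refl.
Qed.

Lemma dist_leaf_exit u w : leaf u -> addr w != addr u ->
  D u w = cube_dist (pos u) ord0 + D (cube_head u) w.
Proof.
move=> lu wu; pose A := [set y | addr y == addr u].
have gate x y : x \in A -> y \notin A -> e x y -> x = cube_head u.
  rewrite !inE => /eqP xu yu /ccc_adjP [[xy _]|[yx _]|[xy x0]].
  - by move: yu; rewrite -xy xu eqxx.
  - by move: (leaf_childless y (pos x) lu); rewrite yx xu eqxx.
  - exact: ccc_eq.
rewrite (dist_cut ccc_adj_sym ccc_connected gate) ?inE //.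
by rewrite dist_leaf_cube.
Qed.

Lemma dist_to_leaf u w : leaf u -> ~~ cube_inner u w ->
  D w u = D w (cube_head u) + cube_dist ord0 (pos u).
Proof.
move=> lu; have [wu|wu] := eqVneq (addr w) (addr u).
  rewrite /cube_inner wu eqxx negbK => /eqP w0.
  have -> : w = cube_head u by apply: ccc_eq.
  by rewrite D_refl dist_leaf_cube.
by rewrite D_sym dist_leaf_exit // [D _ w]D_sym cube_dist_sym addnC.
Qed.

Lemma prefix_rcons_inv (T : eqType) (t s : seq T) q :
  prefix t (rcons s q) -> prefix t s \/ t = rcons s q.
Proof.
case/prefixP => r; case/lastP: r => [|r q'] E; first by right; rewrite cats0 in E.
by left; move: E; rewrite -rcons_cat => /rcons_inj [-> _]; apply: prefix_prefix.
Qed.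

Lemma prefix_head (T : eqType) (x0 : T) (t s : seq T) :
  t != [::] -> prefix t s -> head x0 s = head x0 t.
Proof. by case: t => // a t _; case: s => //= b s /andP [/eqP ->]. Qed.

Lemma edge_into_subtree t x y : e x y -> ~~ prefix t (addr x) -> prefix t (addr y) ->
  [/\ addr y = t, pos y = ord0 & rcons (addr x) (pos x) = t].
Proof.
case/ccc_adjP => [[-> _]|[-> y0]|[-> _]] xt yt.
- by rewrite yt in xt.
- by case/prefix_rcons_inv: yt => [ty|<-]; first by rewrite ty in xt.
- by rewrite -cats1 (prefix_catl _ yt) in xt.
Qed.

Lemma exists_leaf_head_below t : valid_addr t -> t != [::] -> size t < n ->
  exists2 h, leaf_head h & prefix t (addr h).
Proof.
move=> t_valid t_nil t_lt.
have pad_valid m : valid_addr (t ++ nseq m (ord8 1)).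
  by case: t t_valid t_nil {t_lt} => // a t; rewrite /valid_addr /= all_cat all_nseq orbT andbT.
pose s := t ++ nseq (n.-1 - size t) (ord8 1).
have n_gt0 : 0 < n := leq_ltn_trans (leq0n _) t_lt.
have s_size : size s = n.-1 by rewrite size_cat size_nseq subnKC // -ltnS prednK.
have s_lt : size s < n by rewrite s_size prednK.
exists (ccc_vertex s_lt (pad_valid _) ord0); last exact: prefix_prefix.
by rewrite /leaf_head /leaf /= s_size !eqxx.
Qed.

Hypothesis n_ge2 : 1 < n.

Lemma exists_leaf_head_off x : exists2 h, leaf_head h & head ord0 (addr h) != x.
Proof.
have [a ax] : exists a : 'I_8, a != x.
  exists (if x == ord0 then ord8 1 else ord0).
  by case: (x =P ord0) => [->|/eqP]; rewrite // eq_sym.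
have [h lh ah] := exists_leaf_head_below (t := [:: a]) isT isT n_ge2.
by exists h; rewrite // (prefix_head _ _ ah).
Qed.

(* The address of the subtree hanging below [u]: the cube attached at [u], or [u]'s own
   cube when [u] is the head of a non-root cube. *)
Definition branch (u : V) : seq 'I_8 :=
  if (addr u != [::]) && (pos u == ord0) then addr u else rcons (addr u) (pos u).

Lemma branch_valid u : valid_addr (branch u).
Proof.
rewrite /branch; case: ifP => [_|/negbT]; first exact: addr_valid.
by rewrite valid_addr_rcons addr_valid negb_and negbK.
Qed.

Lemma branch_neq_nil u : branch u != [::].
Proof. by rewrite /branch; case: ifP => [/andP []|]; last by case: (addr u). Qed.

Lemma size_branch u : size (branch u) <= (size (addr u)).+1.
Proof. by rewrite /branch; case: ifP; rewrite ?size_rcons. Qed.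

Lemma branch_gate u x y : prefix (branch u) (addr y) -> y != u ->
  ~~ prefix (branch u) (addr x) -> e x y -> x = u.
Proof.
move=> yb yu xb exy; have [yt y0 xt] := edge_into_subtree exy xb yb.
move: yt xt; rewrite /branch; case: ifP => [/andP [_ /eqP u0] yt _|_ _ /rcons_inj [? ?]].
  by case/eqP: yu; apply: ccc_eq; rewrite ?yt ?y0 ?u0.
exact: ccc_eq.
Qed.

Lemma exists_leaf_head_between u v : ~~ inner_leaf u ->
  exists2 h, leaf_head h & D v h = D v u + D u h.
Proof.
move=> u_outer; have [lu|u_nonleaf] := boolP (leaf u).
  exists u; last by rewrite D_refl addn0.
  by move: u_outer; rewrite /inner_leaf /leaf_head lu negbK.
pose B := [set y | prefix (branch u) (addr y) & y != u].
have gate x y : x \in ~: B -> y \notin ~: B -> e x y -> x = u.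
  rewrite !inE negbK negb_and negbK => /orP [xb /andP [yb yu]|/eqP //].
  exact: branch_gate yb yu xb.
have cut := dist_cut ccc_adj_sym ccc_connected gate.
have [vB|vB] := boolP (v \in B).
  have [h lh hb] := exists_leaf_head_off (head ord0 (branch u)).
  have hB : h \in ~: B.
    by rewrite !inE; apply: contra hb => /andP [/(prefix_head _ (branch_neq_nil u)) -> _].
  have vB' : v \notin ~: B by rewrite inE negbK.
  by exists h; rewrite // D_sym (cut h v hB vB') addnC [D u v]D_sym [D h u]D_sym.
have b_lt : size (branch u) < n.
  by have := size_branch u; have := addr_size u; move: u_nonleaf; rewrite /leaf; lia.
have [h lh hb] := exists_leaf_head_below (branch_valid u) (branch_neq_nil u) b_lt.
have hB : h \notin ~: B.
  by rewrite !inE negbK hb; apply: contraNneq u_nonleaf => <-; case/andP: lh.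
by exists h; rewrite // cut // inE.
Qed.

Definition leaf_head_nbrs : {set V} := [set z | leaf z & cube_adj ord0 (pos z)].

Lemma dist_to_leaf_head_nbr w z : z \in leaf_head_nbrs -> ~~ cube_inner z w ->
  D w z = (D w (cube_head z)).+1.
Proof.
rewrite inE cube_adj_dist => /andP [lz /eqP z1] wz.
by rewrite dist_to_leaf // z1 addn1.
Qed.

Lemma exists_far_leaf_head_nbr u : exists2 z, z \in leaf_head_nbrs & addr z != addr u.
Proof.
have [h /andP [lh _] hu] := exists_leaf_head_off (head ord0 (addr u)).
exists (cube_at h (ord8 1)); first by rewrite inE cube_at_pos andbT.
by rewrite cube_at_addr; apply: contra hu => /eqP ->.
Qed.

Lemma inner_leaf_resolved_in_cube u v mu : inner_leaf u -> cube_inner u v ->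
  (forall z, z \in leaf_head_nbrs -> ((D u z)%:Z - (D v z)%:Z = mu)%R) -> u = v.
Proof.
move=> /andP [lu _] /andP [/eqP vu _] shift.
have lv : leaf v by rewrite /leaf vu.
apply: ccc_eq => //; apply: head_nbrs_resolve_cube => x x_nbr.
have [z z_nbr zu] := exists_far_leaf_head_nbr u.
have := shift z z_nbr; have := shift (cube_at u x).
rewrite inE leaf_cube_at lu cube_at_pos x_nbr => /(_ isT).
rewrite (dist_leaf_cube (v := cube_at u x) lu) // (dist_leaf_cube (v := cube_at u x) lv) //.
rewrite (dist_leaf_exit lu zu) (dist_leaf_exit lv) ?vu // (cube_head_eq vu) cube_at_pos.
by lia.
Qed.

Lemma inner_leaf_resolved_off_cube u v mu : inner_leaf u -> ~~ cube_inner u v ->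
  ~ (forall z, z \in leaf_head_nbrs -> ((D u z)%:Z - (D v z)%:Z = mu)%R).
Proof.
move=> /andP [lu u0] vu shift.
have [q /[dup] q0 + dq] := cube_dist_pred u0.
rewrite cube_adj_sym => q_nbr.
have z_nbr : cube_at u q \in leaf_head_nbrs by rewrite inE leaf_cube_at lu.
have [z' z'_nbr z'u] := exists_far_leaf_head_nbr u.
have := shift _ z_nbr; have := shift _ z'_nbr.
have := D_triangle v (cube_head u) z'.
rewrite (dist_to_leaf_head_nbr (w := v) z_nbr) ?cube_head_at; last first.
  by rewrite /cube_inner cube_at_addr.
rewrite (dist_leaf_cube (v := cube_at u q) lu) // (dist_leaf_exit lu z'u) cube_at_pos.
by lia.
Qed.

Lemma outer_resolved u v mu : ~~ inner_leaf u -> ~~ inner_leaf v ->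
  (forall z, z \in leaf_head_nbrs -> ((D u z)%:Z - (D v z)%:Z = mu)%R) -> u = v.
Proof.
move=> u_outer v_outer shift.
have head_shift h : leaf_head h -> ((D u h)%:Z - (D v h)%:Z = mu)%R.
  case/andP=> lh /eqP h0; pose z := cube_at h (ord8 1).
  have z_nbr : z \in leaf_head_nbrs by rewrite inE leaf_cube_at lh.
  have outer w : ~~ inner_leaf w -> ~~ cube_inner z w.
    by apply: contra; apply: cube_inner_leaf.
  have := shift z z_nbr.
  rewrite (dist_to_leaf_head_nbr z_nbr (outer u u_outer)).
  rewrite (dist_to_leaf_head_nbr z_nbr (outer v v_outer)).
  by rewrite /z cube_head_at (cube_head_id h0); lia.
have [h lh vuh] := exists_leaf_head_between v u_outer.
have [h' lh' uvh'] := exists_leaf_head_between u v_outer.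
have := head_shift h lh; have := head_shift h' lh'.
by rewrite vuh uvh' [D v u]D_sym => ? ?; apply: (dist_eq0 ccc_connected); lia.
Qed.

Lemma leaf_head_nbrs_doubly_resolving : doubly_resolving e leaf_head_nbrs.
Proof.
move=> u v uv [mu shift].
have [u_inner|u_outer] := boolP (inner_leaf u).
  have [vu|vu] := boolP (cube_inner u v); last exact: inner_leaf_resolved_off_cube vu shift.
  by case/eqP: uv; apply: inner_leaf_resolved_in_cube vu shift.
have [v_inner|v_outer] := boolP (inner_leaf v).
  apply: (inner_leaf_resolved_off_cube (v := u) (mu := (- mu)%R) v_inner).
    by apply: contra u_outer; apply: cube_inner_leaf; case/andP: v_inner.
  by move=> z /shift <-; lia.
by case/eqP: uv; apply: outer_resolved shift.
Qed.

Definition leaf_addr (i : 'I_8 * (n - 2).-tuple 'I_7) : seq 'I_8 :=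
  i.1 :: map (lift ord0) i.2.

Lemma size_leaf_addr i : size (leaf_addr i) = n.-1.
Proof. by rewrite /= size_map size_tuple; lia. Qed.

Lemma leaf_addr_valid i : valid_addr (leaf_addr i).
Proof. by apply/allP => _ /mapP [j _ ->]; rewrite eq_sym neq_lift. Qed.

Lemma leaf_addr_inj : injective leaf_addr.
Proof.
move=> [a t] [b t'] [-> /(inj_map (@lift_inj _ ord0)) tt'].
by congr pair; apply: val_inj.
Qed.

Lemma leaf_addr_onto s : valid_addr s -> size s = n.-1 -> exists i, leaf_addr i = s.
Proof.
case: s => [|a t] /=; first by lia.
move=> t_valid t_size; pose t' := map (fun y => odflt ord0 (unlift ord0 y)) t.
have t'_size : size t' == n - 2 by rewrite size_map; apply/eqP; lia.
exists (a, Tuple t'_size); congr cons; rewrite /= -map_comp map_id_in // => y /(allP t_valid).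
by rewrite eq_sym => /unlift_some [j -> /= ->].
Qed.

Lemma card_leaf_heads : #|[set h | leaf_head h]| = 8 * 7 ^ (n - 2).
Proof.
have lt i : size (leaf_addr i) < n by rewrite size_leaf_addr prednK ?leqnn // ltnW.
pose h i : V := ccc_vertex (lt i) (leaf_addr_valid i) ord0.
have -> : [set h | leaf_head h] = h @: setT.
  apply/setP => u; rewrite inE; apply/andP/imsetP => [[lu /eqP u0]|[i _ ->]].
    have [i iu] := leaf_addr_onto (addr_valid u) (eqP lu).
    by exists i; last by apply: ccc_eq.
  by split; [apply/eqP/size_leaf_addr | exact: eqxx].
rewrite card_imset; first by rewrite cardsT card_prod card_tuple !card_ord.
by move=> i j /(f_equal addr)/leaf_addr_inj.
Qed.

Lemma card_leaf_head_nbrs : #|leaf_head_nbrs| = 24 * 7 ^ (n - 2).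
Proof.
have -> : leaf_head_nbrs =
    [set cube_at h p | h in [set h | leaf_head h], p in [set p | cube_adj ord0 p]].
  apply/setP => z; rewrite inE; apply/andP/imset2P => [[lz z_nbr]|[h p]].
    exists (cube_head z) (pos z); [by rewrite inE leaf_head_cube_head | by rewrite inE |].
    exact: ccc_eq.
  by rewrite !inE => /andP [lh _] p_nbr ->.
rewrite curry_imset2X card_in_imset ?cardsX ?card_leaf_heads ?card_head_nbrs.
  by rewrite mulnAC.
move=> [h p] [h' p']; rewrite !inE => /andP [/andP [_ /eqP h0] _].
move=> /andP [/andP [_ /eqP h'0] _] hp; have [hh' pp'] := (f_equal addr hp, f_equal pos hp).
by congr pair; first by apply: ccc_eq; rewrite ?h0 ?h'0.
Qed.

Lemma three_in_leaf_cube Z h : doubly_resolving e Z -> leaf_head h ->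
  3 <= #|[set z in Z | (pos z != ord0) && (cube_head z == h)]|.
Proof.
move=> resolving /andP [lh /eqP h0]; rewrite leqNgt; apply/negP => small.
have [z1 [z2 cover]] := card_le2_cover h small.
have [a [b [ab d1 d2]]] := two_cube_vertices_not_resolving (pos z1) (pos z2).
apply: (resolving (cube_at h a) (cube_at h b)).
  by apply: contra ab => /eqP/(f_equal pos)/eqP.
exists ((cube_dist a ord0)%:Z - (cube_dist b ord0)%:Z)%R => z zZ.
have [hz|hz] := boolP (cube_inner h z).
  have /cover zi : z \in [set z in Z | (pos z != ord0) && (cube_head z == h)].
    case/andP: hz => /eqP zh z0; rewrite !inE zZ z0 /=.
    by rewrite (cube_head_eq zh) (cube_head_id h0).
  have [/eqP/esym hz' _] := andP hz.
  rewrite (dist_leaf_cube (u := cube_at h a) lh hz') (dist_leaf_cube (u := cube_at h b) lh hz').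
  by rewrite !cube_at_pos; case: zi => ->; lia.
rewrite D_sym (dist_to_leaf (u := cube_at h a) lh hz) [D _ z]D_sym.
rewrite (dist_to_leaf (u := cube_at h b) lh hz) !cube_head_at !cube_at_pos.
by rewrite !(cube_dist_sym ord0); lia.
Qed.

Lemma doubly_resolving_card_ge Z : doubly_resolving e Z -> 24 * 7 ^ (n - 2) <= #|Z|.
Proof.
move=> resolving; apply: leq_trans (card_fibers_le cube_head leaf_head Z).
have -> : 24 * 7 ^ (n - 2) = #|[set h | leaf_head h]| * 3 by rewrite card_leaf_heads; lia.
rewrite -sum_nat_cond_const.
apply: leq_sum => h lh; apply: leq_trans (three_in_leaf_cube resolving lh) _.
by apply: subset_leq_card; apply/subsetP => z; rewrite !inE => /and3P [-> _ ->].
Qed.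

End CCCGraph.

Theorem theorem1 (n : nat) (hn : 2 <= n) :
  psi_is (@ccc_adj n) (24 * 7 ^ (n - 2)).
Proof.
split; last exact: doubly_resolving_card_ge hn.
exists (leaf_head_nbrs n); split; first exact: leaf_head_nbrs_doubly_resolving hn.
exact: card_leaf_head_nbrs hn.
Qed.
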